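(* Let $q\geq 3$ be an odd integer. Then the group $G_{1,q}=\langle a,b,s,t\mid [a,b],\ s^{-1}a^qs=ab,\ t^{-1}a^qt=ab^{-1}\rangle$ is not Hopfian.
   Context: A group is Hopfian if every surjective endomorphism of it is injective. *)

(* Concrete construction of the finitely presented group
   G_{1,q} = < a,b,s,t | [a,b], s^-1 a^q s = ab, t^-1 a^q t = ab^-1 >
   as (free-group words on a,b,s,t) modulo the congruence generated by
   free reduction and the relators; the group elements are the
   equivalence classes (sets of words), multiplication is concatenation
   of chosen representatives. *)
From Stdlib Require Import List Arith Relations ClassicalEpsilon.
Import ListNotations.

Inductive gen : Type := ga | gb | gs | gt.

(* a letter is a generator together with an exponent sign:
   (x, true) = x, (x, false) = x^-1 *)
Definition letter := (gen * bool)%type.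
Definition word := list letter.

Definition linv (l : letter) : letter := (fst l, negb (snd l)).
Definition winv (w : word) : word := rev (map linv w).

Definition A : word := [(ga, true)].
Definition Ai : word := [(ga, false)].
Definition B : word := [(gb, true)].
Definition Bi : word := [(gb, false)].
Definition Sg : word := [(gs, true)].
Definition Sgi : word := [(gs, false)].
Definition Tg : word := [(gt, true)].
Definition Tgi : word := [(gt, false)].

Fixpoint wpow (w : word) (n : nat) : word :=
  match n with 0 => [] | Datatypes.S m => w ++ wpow w m end.

Definition rel_comm : word := Ai ++ Bi ++ A ++ B.
Definition rel_s (q : nat) : word := Sgi ++ wpow A q ++ Sg ++ winv (A ++ B).
Definition rel_t (q : nat) : word := Tgi ++ wpow A q ++ Tg ++ winv (A ++ Bi).

Definition is_relator (q : nat) (r : word) : Prop :=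
  r = rel_comm \/ r = rel_s q \/ r = rel_t q.

Inductive step (q : nat) : word -> word -> Prop :=
  | step_free : forall u v l, step q (u ++ l :: linv l :: v) (u ++ v)
  | step_rel : forall u v r, is_relator q r -> step q (u ++ r ++ v) (u ++ v).

Definition eqv (q : nat) : relation word := clos_refl_sym_trans word (step q).

Definition G1 (q : nat) : Type := { P : word -> Prop | exists w, P = eqv q w }.

Definition cls (q : nat) (w : word) : G1 q := exist _ (eqv q w) (ex_intro _ w eq_refl).

Definition rep (q : nat) (x : G1 q) : word :=
  proj1_sig (constructive_indefinite_description _ (proj2_sig x)).

Definition gmul (q : nat) (x y : G1 q) : G1 q := cls q (rep q x ++ rep q y).

(* A group G is Hopfian if every surjective endomorphism is injective.
   (For a map between groups, preserving multiplication is equivalent to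
   being a homomorphism.) *)
Definition Hopfian (G : Type) (mul : G -> G -> G) : Prop :=
  forall f : G -> G,
    (forall x y, f (mul x y) = mul (f x) (f y)) ->
    (forall y, exists x, f x = y) ->
    (forall x y, f x = f y -> x = y).

(* The endomorphism phi of G_{1,q} fixing s, t and sending a to a^q, b to b^q respects the
   relators: a^q and b^q commute, s^-1 a^(q^2) s = (ab)^q = a^q b^q, and likewise for t.
   It is onto: phi(s^-1 a s t^-1 a t) = ab ab^-1 = a^2, so for q = 2m + 1 the element
   a = a^q a^(-2m) is in the image, and then so is b = a^-1 s^-1 a^q s.
   It kills the commutator of s^-1 a s and a, because s^-1 a^q s = ab commutes with a^q.
   That commutator is nontrivial: G_{1,q} acts on the real line with a, b the translations
   by 1 and q - 1, t the dilation by -q/(q - 2) (which conjugates the translation by q into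
   the translation by 2 - q), and s the q-periodic involution exchanging [0,1) and [1,2)
   modulo q; the words s^-1 a s a and a s^-1 a s send 0 to 0 and to 3 respectively. *)

From Stdlib Require Import List Lia Relations Setoid Morphisms.
From Stdlib Require Import Reals Lra.
From Stdlib Require Import ClassicalEpsilon FunctionalExtensionality PropExtensionality ProofIrrelevance.
Import ListNotations.

Lemma linv_involutive (l : letter) : linv (linv l) = l.
Proof. now destruct l as [g []]. Qed.

Lemma winv_app (u v : word) : winv (u ++ v) = winv v ++ winv u.
Proof. unfold winv. now rewrite map_app, rev_app_distr. Qed.

Lemma winv_cons (l : letter) (u : word) : winv (l :: u) = winv u ++ [linv l].
Proof. reflexivity. Qed.

Lemma winv_involutive (u : word) : winv (winv u) = u.
Proof.
  induction u as [|l u IH]; [reflexivity|].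
  rewrite winv_cons, winv_app, IH. simpl. now rewrite linv_involutive.
Qed.

Lemma wpow_succ_r (w : word) (n : nat) : wpow w (S n) = wpow w n ++ w.
Proof.
  induction n as [|n IH]; [simpl; now rewrite app_nil_r|].
  change (wpow w (S (S n))) with (w ++ wpow w (S n)).
  rewrite IH at 1. now rewrite app_assoc.
Qed.

Lemma wpow_double (w : word) (m : nat) : wpow w (m + m) = wpow (w ++ w) m.
Proof.
  induction m as [|m IH]; [reflexivity|].
  rewrite Nat.add_succ_r. simpl. now rewrite IH, app_assoc.
Qed.

Lemma winv_wpow (w : word) (n : nat) : winv (wpow w n) = wpow (winv w) n.
Proof.
  induction n as [|n IH]; [reflexivity|].
  now rewrite wpow_succ_r, winv_app, IH.
Qed.

Definition letter_img (h : gen -> word) (l : letter) : word :=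
  if snd l then h (fst l) else winv (h (fst l)).

Definition subst (h : gen -> word) (w : word) : word := flat_map (letter_img h) w.

Lemma subst_app (h : gen -> word) (u v : word) : subst h (u ++ v) = subst h u ++ subst h v.
Proof. apply flat_map_app. Qed.

Lemma subst_cons (h : gen -> word) (l : letter) (u : word) :
  subst h (l :: u) = letter_img h l ++ subst h u.
Proof. reflexivity. Qed.

Lemma letter_img_linv (h : gen -> word) (l : letter) :
  letter_img h (linv l) = winv (letter_img h l).
Proof.
  destruct l as [g []]; unfold letter_img; simpl; [reflexivity|].
  now rewrite winv_involutive.
Qed.

Lemma subst_winv (h : gen -> word) (u : word) : subst h (winv u) = winv (subst h u).
Proof.
  induction u as [|l u IH]; [reflexivity|].
  rewrite winv_cons, subst_app, IH, (subst_cons h l u), winv_app, <- letter_img_linv.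
  change (subst h [linv l]) with (letter_img h (linv l) ++ []).
  now rewrite app_nil_r.
Qed.

Lemma subst_wpow (h : gen -> word) (w : word) (n : nat) :
  subst h (wpow w n) = wpow (subst h w) n.
Proof. induction n as [|n IH]; [reflexivity|]. simpl. now rewrite subst_app, IH. Qed.

Definition word_act {X : Type} (f : letter -> X -> X) (w : word) (x : X) : X :=
  fold_right f x w.

Lemma word_act_app {X : Type} (f : letter -> X -> X) (u v : word) (x : X) :
  word_act f (u ++ v) x = word_act f u (word_act f v x).
Proof. apply fold_right_app. Qed.

Section Congruence.

Variable q : nat.

Local Infix "≡" := (eqv q) (at level 70).

Global Instance eqv_Equivalence : Equivalence (eqv q).
Proof.
  split.
  - intro u; apply rst_refl.
  - intros u v; apply rst_sym.
  - intros u v w; apply rst_trans.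
Qed.

Lemma step_app_ctx (p s u v : word) : step q u v -> step q (p ++ u ++ s) (p ++ v ++ s).
Proof.
  intros [u0 v0 l | u0 v0 r Hr].
  - pose proof (step_free q (p ++ u0) (v0 ++ s) l) as H.
    rewrite <- !app_assoc in *. exact H.
  - pose proof (step_rel q (p ++ u0) (v0 ++ s) r Hr) as H.
    rewrite <- !app_assoc in *. exact H.
Qed.

Lemma eqv_app_ctx (p s u v : word) : u ≡ v -> p ++ u ++ s ≡ p ++ v ++ s.
Proof.
  induction 1.
  - now apply rst_step, step_app_ctx.
  - reflexivity.
  - now symmetry.
  - etransitivity; eassumption.
Qed.

Global Instance app_Proper : Proper (eqv q ==> eqv q ==> eqv q) (@app letter).
Proof.
  intros u u' Hu v v' Hv.
  transitivity (u' ++ v).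
  - exact (eqv_app_ctx [] v u u' Hu).
  - pose proof (eqv_app_ctx u' [] v v' Hv) as H. now rewrite !app_nil_r in H.
Qed.

Lemma relator_eqv_nil (r : word) : is_relator q r -> r ≡ [].
Proof.
  intros Hr. apply rst_step.
  pose proof (step_rel q [] [] r Hr) as H. now rewrite app_nil_r in H.
Qed.

Lemma app_winv_r (u : word) : u ++ winv u ≡ [].
Proof.
  induction u as [|l u IH]; [reflexivity|].
  rewrite winv_cons, app_assoc.
  change ((l :: u) ++ winv u) with ([l] ++ (u ++ winv u)).
  rewrite IH. apply rst_step. exact (step_free q [] [] l).
Qed.

Lemma app_winv_l (u : word) : winv u ++ u ≡ [].
Proof. rewrite <- (winv_involutive u) at 2. apply app_winv_r. Qed.

Lemma eqv_of_app_winv_r (u v : word) : u ++ winv v ≡ [] -> u ≡ v.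
Proof.
  intros H. rewrite <- (app_nil_r u), <- (app_winv_l v), app_assoc, H.
  reflexivity.
Qed.

Lemma eqv_of_winv_app (u v : word) : winv v ++ u ≡ [] -> u ≡ v.
Proof.
  intros H. rewrite <- (app_nil_l u), <- (app_winv_r v), <- app_assoc, H, app_nil_r.
  reflexivity.
Qed.

Global Instance winv_Proper : Proper (eqv q ==> eqv q) winv.
Proof.
  intros u v H. apply eqv_of_app_winv_r. rewrite winv_involutive, <- H.
  apply app_winv_l.
Qed.

Global Instance wpow_Proper : Proper (eqv q ==> eq ==> eqv q) wpow.
Proof.
  intros u v H n _ <-. induction n as [|n IH]; simpl; [reflexivity|].
  now rewrite IH, H.
Qed.

Lemma wpow_commute (x y : word) (n : nat) :
  x ++ y ≡ y ++ x -> wpow x n ++ y ≡ y ++ wpow x n.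
Proof.
  intros H. induction n as [|n IH]; simpl; [now rewrite app_nil_r|].
  now rewrite <- app_assoc, IH, app_assoc, H, app_assoc.
Qed.

Lemma wpow_app_commute (x y : word) (n : nat) :
  x ++ y ≡ y ++ x -> wpow (x ++ y) n ≡ wpow x n ++ wpow y n.
Proof.
  intros H. induction n as [|n IH]; simpl; [reflexivity|].
  rewrite IH, <- !app_assoc, (app_assoc y), <- (wpow_commute x y n H).
  now rewrite <- !app_assoc.
Qed.

Lemma commute_winv_r (x y : word) : x ++ y ≡ y ++ x -> x ++ winv y ≡ winv y ++ x.
Proof.
  intros H. apply eqv_of_winv_app.
  rewrite winv_app, winv_involutive, <- app_assoc, (app_assoc y), <- H.
  rewrite <- app_assoc, app_winv_r, app_nil_r. apply app_winv_l.
Qed.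

Lemma conj_wpow (g x : word) (n : nat) :
  winv g ++ wpow x n ++ g ≡ wpow (winv g ++ x ++ g) n.
Proof.
  induction n as [|n IH]; simpl; [apply app_winv_l|].
  rewrite <- IH. transitivity (winv g ++ x ++ (g ++ winv g) ++ wpow x n ++ g).
  - rewrite app_winv_r. simpl. now rewrite <- !app_assoc.
  - now rewrite <- !app_assoc.
Qed.

Lemma app_winv_eqv_nil (u v : word) : u ≡ v -> u ++ winv v ≡ [].
Proof. intros H. rewrite H. apply app_winv_r. Qed.

Lemma wpow_wpow_commute (x y : word) (m n : nat) :
  x ++ y ≡ y ++ x -> wpow x m ++ wpow y n ≡ wpow y n ++ wpow x m.
Proof.
  intros H. apply wpow_commute. symmetry. apply wpow_commute. now symmetry.
Qed.

Lemma conj_wpow_commuting (g x y z : word) (n : nat) :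
  winv g ++ x ++ g ≡ y ++ z -> y ++ z ≡ z ++ y ->
  winv g ++ wpow x n ++ g ≡ wpow y n ++ wpow z n.
Proof. intros Hg Hyz. rewrite conj_wpow, Hg. now apply wpow_app_commute. Qed.

Lemma commute_ab : A ++ B ≡ B ++ A.
Proof.
  apply eqv_of_winv_app, relator_eqv_nil. now left.
Qed.

Lemma conj_s_apow : Sgi ++ wpow A q ++ Sg ≡ A ++ B.
Proof.
  apply eqv_of_app_winv_r, relator_eqv_nil. right; left.
  unfold rel_s. now rewrite <- !app_assoc.
Qed.

Lemma conj_t_apow : Tgi ++ wpow A q ++ Tg ≡ A ++ Bi.
Proof.
  apply eqv_of_app_winv_r, relator_eqv_nil. right; right.
  unfold rel_t. now rewrite <- !app_assoc.
Qed.

Lemma subst_eqv (h : gen -> word) :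
  (forall r, is_relator q r -> subst h r ≡ []) ->
  forall u v, u ≡ v -> subst h u ≡ subst h v.
Proof.
  intros Hrel u v. induction 1 as [u v [u0 v0 l | u0 v0 r Hr] | | |].
  - rewrite !subst_app, !subst_cons, letter_img_linv, (app_assoc (letter_img h l)).
    now rewrite app_winv_r.
  - rewrite !subst_app, (Hrel r Hr). reflexivity.
  - reflexivity.
  - now symmetry.
  - etransitivity; eassumption.
Qed.

Lemma word_act_eqv {X : Type} (f : letter -> X -> X) :
  (forall l x, f l (f (linv l) x) = x) ->
  (forall r x, is_relator q r -> word_act f r x = x) ->
  forall u v, u ≡ v -> word_act f u = word_act f v.
Proof.
  intros Hinv Hrel u v. induction 1 as [u v [u0 v0 l | u0 v0 r Hr] | | |].
  - extensionality x. rewrite !word_act_app. simpl. now rewrite Hinv.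
  - extensionality x. rewrite !word_act_app, (Hrel r _ Hr). reflexivity.
  - reflexivity.
  - now symmetry.
  - etransitivity; eassumption.
Qed.

Lemma subst_surjective (h : gen -> word) :
  (forall g, exists w, subst h w ≡ [(g, true)]) -> forall u, exists w, subst h w ≡ u.
Proof.
  intros Hgen u. induction u as [|[g e] u [w Hw]]; [now exists []|].
  destruct (Hgen g) as [wg Hg].
  exists ((if e then wg else winv wg) ++ w).
  rewrite subst_app, Hw. change ((g, e) :: u) with ([(g, e)] ++ u).
  destruct e; [now rewrite Hg|].
  now rewrite subst_winv, Hg.
Qed.

End Congruence.

Section Quotient.

Variable q : nat.

Lemma cls_eq_iff (u v : word) : cls q u = cls q v <-> eqv q u v.
Proof.
  split.
  - intros H. apply (f_equal (@proj1_sig _ _)) in H. simpl in H.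
    rewrite H. reflexivity.
  - intros H. unfold cls. apply eq_exist_uncurried.
    assert (E : eqv q u = eqv q v).
    { extensionality w. apply propositional_extensionality. now rewrite H. }
    exists E. apply proof_irrelevance.
Qed.

Lemma cls_rep (x : G1 q) : cls q (rep q x) = x.
Proof.
  destruct x as [P HP]. unfold rep, cls. simpl.
  destruct (constructive_indefinite_description _ HP) as [w ->]. simpl.
  f_equal. apply proof_irrelevance.
Qed.

Lemma rep_cls (w : word) : eqv q (rep q (cls q w)) w.
Proof. apply cls_eq_iff, cls_rep. Qed.

Lemma gmul_cls (u v : word) : gmul q (cls q u) (cls q v) = cls q (u ++ v).
Proof. apply cls_eq_iff. now rewrite !rep_cls. Qed.

Lemma not_Hopfian_of_subst (h : gen -> word) (u v : word) :
  (forall r, is_relator q r -> eqv q (subst h r) []) ->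
  (forall g, exists w, eqv q (subst h w) [(g, true)]) ->
  eqv q (subst h u) (subst h v) -> ~ eqv q u v ->
  ~ Hopfian (G1 q) (gmul q).
Proof.
  intros Hrel Hgen Huv Hne Hopf.
  set (f x := cls q (subst h (rep q x))).
  assert (f_cls : forall w, f (cls q w) = cls q (subst h w)).
  { intros w. apply cls_eq_iff, subst_eqv, rep_cls. exact Hrel. }
  apply Hne, cls_eq_iff, (Hopf f).
  - intros x y. rewrite <- (cls_rep x), <- (cls_rep y).
    now rewrite gmul_cls, !f_cls, gmul_cls, subst_app.
  - intros y. rewrite <- (cls_rep y).
    destruct (subst_surjective q h Hgen (rep q y)) as [w Hw].
    exists (cls q w). now rewrite f_cls; apply cls_eq_iff.
  - rewrite !f_cls. now apply cls_eq_iff.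
Qed.

End Quotient.

Definition phi_gen (q : nat) (g : gen) : word :=
  match g with ga => wpow A q | gb => wpow B q | gs => Sg | gt => Tg end.

Section Endomorphism.

Variable q : nat.

Local Infix "≡" := (eqv q) (at level 70).

Lemma subst_phi_A : subst (phi_gen q) A = wpow A q.
Proof. apply app_nil_r. Qed.

Lemma subst_phi_Ai : subst (phi_gen q) Ai = winv (wpow A q).
Proof. apply app_nil_r. Qed.

Lemma subst_phi_B : subst (phi_gen q) B = wpow B q.
Proof. apply app_nil_r. Qed.

Lemma subst_phi_Bi : subst (phi_gen q) Bi = winv (wpow B q).
Proof. apply app_nil_r. Qed.

Lemma subst_phi_Sg : subst (phi_gen q) Sg = Sg.
Proof. reflexivity. Qed.

Lemma subst_phi_Sgi : subst (phi_gen q) Sgi = Sgi.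
Proof. reflexivity. Qed.

Lemma subst_phi_Tg : subst (phi_gen q) Tg = Tg.
Proof. reflexivity. Qed.

Lemma subst_phi_Tgi : subst (phi_gen q) Tgi = Tgi.
Proof. reflexivity. Qed.

Hint Rewrite subst_app subst_winv subst_wpow subst_phi_A subst_phi_Ai subst_phi_B
  subst_phi_Bi subst_phi_Sg subst_phi_Sgi subst_phi_Tg subst_phi_Tgi : subst_phi.

Lemma apow_commute_ab : wpow A q ++ (A ++ B) ≡ (A ++ B) ++ wpow A q.
Proof. apply wpow_commute. rewrite <- app_assoc, <- commute_ab. reflexivity. Qed.

Lemma phi_relators (r : word) : is_relator q r -> subst (phi_gen q) r ≡ [].
Proof.
  intros [-> | [-> | ->]]; unfold rel_comm, rel_s, rel_t; autorewrite with subst_phi.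
  - rewrite (app_assoc (winv _)), <- winv_app, (wpow_wpow_commute q A B q q (commute_ab q)).
    apply app_winv_l.
  - rewrite !app_assoc, <- (app_assoc Sgi).
    apply app_winv_eqv_nil, (conj_wpow_commuting q Sg); [apply conj_s_apow | apply commute_ab].
  - rewrite !app_assoc, <- (app_assoc Tgi), winv_wpow.
    apply app_winv_eqv_nil, (conj_wpow_commuting q Tg); [apply conj_t_apow|].
    apply commute_winv_r, commute_ab.
Qed.

Lemma phi_kills_commutator :
  subst (phi_gen q) (Sgi ++ A ++ Sg ++ A) ≡ subst (phi_gen q) (A ++ Sgi ++ A ++ Sg).
Proof.
  autorewrite with subst_phi.
  rewrite (app_assoc (wpow A q) Sg), (app_assoc Sgi), conj_s_apow.
  symmetry. apply apow_commute_ab.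
Qed.

Definition st_word : word := Sgi ++ A ++ Sg ++ Tgi ++ A ++ Tg.

Lemma subst_phi_st_word : subst (phi_gen q) st_word ≡ A ++ A.
Proof.
  unfold st_word. autorewrite with subst_phi.
  rewrite (app_assoc (wpow A q) Sg), (app_assoc Sgi), conj_s_apow.
  rewrite conj_t_apow.
  rewrite <- app_assoc, (app_assoc B A Bi), <- commute_ab, <- app_assoc.
  rewrite (app_winv_r q B), app_nil_r. reflexivity.
Qed.

Lemma subst_phi_a_preimage (m : nat) :
  q = 2 * m + 1 -> subst (phi_gen q) (A ++ wpow (winv st_word) m) ≡ A.
Proof.
  intros Hq. autorewrite with subst_phi. rewrite subst_phi_st_word, <- winv_wpow.
  assert (E : wpow A q = A ++ wpow (A ++ A) m).
  { rewrite Hq. replace (2 * m + 1) with (S (m + m)) by lia. simpl. now rewrite wpow_double. }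
  rewrite E, <- app_assoc, app_winv_r, app_nil_r. reflexivity.
Qed.

Lemma phi_generators_in_image (m : nat) : q = 2 * m + 1 ->
  forall g, exists w, subst (phi_gen q) w ≡ [(g, true)].
Proof.
  intros Hq. pose proof (subst_phi_a_preimage m Hq) as Ha.
  intros [].
  - eexists; exact Ha.
  - exists (winv (A ++ wpow (winv st_word) m) ++ Sgi ++ A ++ Sg).
    rewrite subst_app, subst_winv, Ha. autorewrite with subst_phi.
    rewrite conj_s_apow, app_assoc, app_winv_l. reflexivity.
  - now exists Sg.
  - now exists Tg.
Qed.

End Endomorphism.

Open Scope R_scope.

Definition periodic_ext (p : R) (g : R -> R) (x : R) : R :=
  let k := IZR (Int_part (x / p)) in p * k + g (x - p * k).

Section PeriodicExtension.

Variable p : R.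
Hypothesis p_pos : 0 < p.

Lemma periodic_decomp (x : R) : exists z r, 0 <= r < p /\ x = p * IZR z + r.
Proof.
  exists (Int_part (x / p)), (x - p * IZR (Int_part (x / p))).
  destruct (base_Int_part (x / p)) as [H1 H2].
  assert (Hx : x = p * (x / p)) by (field; lra).
  split; [|ring]. split; nra.
Qed.

Lemma periodic_ext_eq (g : R -> R) (z : Z) (r : R) :
  0 <= r < p -> periodic_ext p g (p * IZR z + r) = p * IZR z + g r.
Proof.
  intros Hr. unfold periodic_ext.
  assert (Hz : Int_part ((p * IZR z + r) / p) = z).
  { symmetry. apply Int_part_spec.
    replace ((p * IZR z + r) / p) with (IZR z + r / p) by (field; lra).
    assert (Hrp : r = p * (r / p)) by (field; lra).
    nra. }
  rewrite Hz. do 2 f_equal. ring.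
Qed.

Lemma periodic_ext_shift (g : R -> R) (x : R) :
  periodic_ext p g (x + p) = periodic_ext p g x + p.
Proof.
  destruct (periodic_decomp x) as (z & r & Hr & ->).
  replace (p * IZR z + r + p) with (p * IZR (z + 1) + r) by (rewrite plus_IZR; ring).
  rewrite !periodic_ext_eq by assumption. rewrite plus_IZR. ring.
Qed.

Lemma periodic_ext_involutive (g : R -> R) (x : R) :
  (forall r, 0 <= r < p -> 0 <= g r < p /\ g (g r) = r) ->
  periodic_ext p g (periodic_ext p g x) = x.
Proof.
  intros Hg. destruct (periodic_decomp x) as (z & r & Hr & ->).
  destruct (Hg r Hr) as [Hgr Hggr].
  now rewrite !periodic_ext_eq, Hggr.
Qed.

Lemma periodic_ext_base (g : R -> R) (r : R) : 0 <= r < p -> periodic_ext p g r = g r.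
Proof.
  intros Hr. pose proof (periodic_ext_eq g 0 r Hr) as H.
  rewrite Rmult_0_r, !Rplus_0_l in H. exact H.
Qed.

End PeriodicExtension.

Definition swap12 (r : R) : R :=
  if Rlt_dec r 1 then r + 1 else if Rlt_dec r 2 then r - 1 else r.

Lemma swap12_involutive_on (p r : R) :
  2 <= p -> 0 <= r < p -> 0 <= swap12 r < p /\ swap12 (swap12 r) = r.
Proof. intros. unfold swap12; repeat destruct Rlt_dec; lra. Qed.

Definition real_act (Q : R) (l : letter) (x : R) : R :=
  match l with
  | (ga, true) => x + 1
  | (ga, false) => x - 1
  | (gb, true) => x + (Q - 1)
  | (gb, false) => x - (Q - 1)
  | (gs, _) => periodic_ext Q swap12 x
  | (gt, true) => - (Q / (Q - 2)) * x
  | (gt, false) => - ((Q - 2) / Q) * x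
  end.

Section RealAction.

Variable q : nat.
Hypothesis q_ge3 : (3 <= q)%nat.

Let Q := INR q.

Lemma Q_ge3 : 3 <= Q.
Proof. apply le_INR in q_ge3. simpl in q_ge3. unfold Q. lra. Qed.

Lemma swap_act_involutive (x : R) : periodic_ext Q swap12 (periodic_ext Q swap12 x) = x.
Proof.
  pose proof Q_ge3. apply periodic_ext_involutive; [lra|].
  intros r. apply swap12_involutive_on. lra.
Qed.

Lemma real_act_linv (l : letter) (x : R) : real_act Q l (real_act Q (linv l) x) = x.
Proof.
  pose proof Q_ge3.
  destruct l as [[] []]; simpl; try ring; try apply swap_act_involutive; field; lra.
Qed.

Lemma word_act_wpow_a (n : nat) (x : R) : word_act (real_act Q) (wpow A n) x = x + INR n.
Proof.
  induction n as [|n IH]; simpl; [ring|].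
  change (fold_right (real_act Q) x (wpow A n)) with (word_act (real_act Q) (wpow A n) x).
  rewrite IH. destruct n; simpl; ring.
Qed.

Lemma real_act_relator (r : word) (x : R) :
  is_relator q r -> word_act (real_act Q) r x = x.
Proof.
  pose proof Q_ge3.
  intros [-> | [-> | ->]]; [simpl; ring | unfold rel_s | unfold rel_t];
    rewrite !word_act_app, word_act_wpow_a; fold Q; simpl.
  - replace (x - 1 - (Q - 1)) with (x - Q) by ring.
    replace (periodic_ext Q swap12 (x - Q) + Q) with (periodic_ext Q swap12 x).
    + apply swap_act_involutive.
    + rewrite <- periodic_ext_shift by lra. f_equal. ring.
  - field. lra.
Qed.

Lemma commutator_nontrivial : ~ eqv q (Sgi ++ A ++ Sg ++ A) (A ++ Sgi ++ A ++ Sg).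
Proof.
  pose proof Q_ge3 as HQ. intros H.
  apply (word_act_eqv q (real_act Q) real_act_linv real_act_relator) in H.
  apply (f_equal (fun f => f 0)) in H. simpl in H.
  assert (Hswap : forall r, 0 <= r < Q -> periodic_ext Q swap12 r = swap12 r)
    by (intros; apply periodic_ext_base; lra).
  assert (S0 : periodic_ext Q swap12 0 = 1).
  { rewrite Hswap by lra. unfold swap12. repeat destruct Rlt_dec; lra. }
  assert (S1 : periodic_ext Q swap12 1 = 0).
  { rewrite Hswap by lra. unfold swap12. repeat destruct Rlt_dec; lra. }
  assert (S2 : periodic_ext Q swap12 2 = 2).
  { rewrite Hswap by lra. unfold swap12. repeat destruct Rlt_dec; lra. }
  rewrite Rplus_0_l, S1, S0, Rplus_0_l, S1 in H.
  replace (1 + 1) with 2 in H by ring. rewrite S2 in H.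
  lra.
Qed.

End RealAction.

Close Scope R_scope.

Theorem theorem3p1 (q : nat) (hq : 3 <= q) (hodd : Nat.Odd q) :
  ~ Hopfian (G1 q) (gmul q).
Proof.
  destruct hodd as [m Hm].
  apply (not_Hopfian_of_subst q (phi_gen q) (Sgi ++ A ++ Sg ++ A) (A ++ Sgi ++ A ++ Sg)).
  - apply phi_relators.
  - exact (phi_generators_in_image q m Hm).
  - apply phi_kills_commutator.
  - exact (commutator_nontrivial q hq).
Qed.
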